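(* Let $t\ge 2$ and $s\ge1$ be integers and let $H$ be a $t$-uniform hypergraph on the vertex set $[n]=\{1,\dots,n\}$. Suppose $H$ does not contain a complete $t$-partite hypergraph with parts $V_1,\dots,V_t\subseteq[n]$ such that $|V_i|=s$ for all $i$ and every element of $V_i$ is smaller than every element of $V_j$ whenever $i<j$ (i.e., there are no such sets with every $t$-set $\{v_1,\dots,v_t\}$, $v_i\in V_i$, being an edge of $H$). Then $H$ has at most $2n^{t-\delta}$ edges, where $\delta=\frac{1}{ts^{t-1}}$. *)

From mathcomp Require Import all_boot all_order all_algebra.
From mathcomp Require Import all_classical all_reals all_analysis.
Set Implicit Arguments. Unset Strict Implicit. Unset Printing Implicit Defensive.
Import Order.TTheory GRing.Theory Num.Theory.

(* A t-uniform hypergraph on vertex set 'I_n (= {0,..,n-1}, ordered as nat,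
   order-isomorphic to [n]) is a set of edges, each a t-element vertex set. *)
Definition uniform (n t : nat) (H : {set {set 'I_n}}) : Prop :=
  forall e, e \in H -> #|e| = t.

Definition contains_ordered_Kts (n t s : nat) (H : {set {set 'I_n}}) : Prop :=
  exists V : 'I_t -> {set 'I_n},
    [/\ forall i, #|V i| = s,
        forall (i j : 'I_t), (i < j)%N ->
          forall x y, x \in V i -> y \in V j -> (x < y)%N
      & forall f : 'I_t -> 'I_n, (forall i, f i \in V i) ->
          [set f i | i : 'I_t] \in H].

From mathcomp Require Import all_boot all_order all_algebra.
From mathcomp Require Import all_classical all_reals all_analysis.
From mathcomp Require Import zify ring lra.
Set Implicit Arguments. Unset Strict Implicit. Unset Printing Implicit Defensive.
Import Order.TTheory GRing.Theory Num.Theory.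

(* Induction on t.  For a (t-1)-set f let N(f) be the set of vertices x above
   max f with f + x an edge, so that |H| = sum_f |N(f)|.  The link of an s-set S,
   i.e. the (t-1)-sets f with S inside N(f), has no ordered K_{s,...,s} of
   uniformity t-1, since S could be appended to one as a last part.  Double
   counting gives sum_S |link S| = sum_f C(|N(f)|, s), and the power-mean
   inequality turns the inductive bound on the links into a bound on
   sum_f (|N(f)| - s + 1).  The induction carries a real parameter rho with
   rho^(s^(t-1)) = n and reads |H| rho <= 4 n^t + (s-1) n^(t-1) rho.  For
   rho = r^t with r = n^delta this gives |H| r <= 2 n^t as soon as r > 4, and
   otherwise |H| <= n^t / t! is enough. *)

Lemma exists_subset_card (T : finType) (A : {set T}) m :
  m <= #|A| -> exists2 B : {set T}, B \subset A & #|B| = m.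
Proof.
rewrite -bin_gt0 -cards_draws => /card_gt0P [B].
by rewrite inE => /andP [sBA /eqP cB]; exists B.
Qed.

Lemma ffact_leq_expn n m : n ^_ m <= n ^ m.
Proof.
have -> : n ^ m = \prod_(i < m) n by rewrite prod_nat_const card_ord.
by rewrite ffact_prod; apply: leq_prod => i _; rewrite leq_subr.
Qed.

Lemma expn_subSn_leq_ffact n m : (n.+1 - m) ^ m <= n ^_ m.
Proof.
have -> : (n.+1 - m) ^ m = \prod_(i < m) (n.+1 - m).
  by rewrite prod_nat_const card_ord.
by rewrite ffact_prod; apply: leq_prod => i _; have := ltn_ord i; lia.
Qed.

Lemma fact_mul_bin_leq_expn n m : m`! * 'C(n, m) <= n ^ m.
Proof. by rewrite mulnC bin_ffact ffact_leq_expn. Qed.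

Lemma bin_leq_expn n m : 'C(n, m) <= n ^ m.
Proof. exact: leq_trans (leq_pmull _ (fact_gt0 m)) (fact_mul_bin_leq_expn n m). Qed.

Lemma expn_mul_add_leq x y m : x ^ m * y + y ^ m * x <= x ^ m.+1 + y ^ m.+1.
Proof.
wlog le_xy : x y / x <= y.
  move=> W; case: (leqP x y) => [/W//|/ltnW/W].
  by rewrite [x ^ m * y + _]addnC [x ^ m.+1 + _]addnC.
have : x ^ m <= y ^ m by elim: m => // m IH; rewrite !expnS leq_mul.
rewrite !expnS; nia.
Qed.

Lemma sum_expn_mul_sum_leq (I : finType) (A : pred I) (a : I -> nat) m :
  (\sum_(i in A) a i ^ m) * (\sum_(i in A) a i) <= #|A| * \sum_(i in A) a i ^ m.+1.
Proof.
rewrite -(leq_pmul2l (ltn0Sn 1)) !mul2n -!addnn.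
rewrite {1}big_distrlr big_distrlr [X in X + _]exchange_big /=.
rewrite -[#|A| * _]sum_nat_const [X in _ <= _ + X]exchange_big /= -!big_split /=.
apply: leq_sum => i _; rewrite -!big_split /=; apply: leq_sum => j _.
exact: expn_mul_add_leq.
Qed.

Lemma expn_sum_leq (I : finType) (A : pred I) (a : I -> nat) m :
  (\sum_(i in A) a i) ^ m.+1 <= #|A| ^ m * \sum_(i in A) a i ^ m.+1.
Proof.
elim: m => [|m IH]; first by rewrite expn0 mul1n expn1.
rewrite expnS mulnC (leq_trans (leq_mul IH (leqnn _))) // expnS -!mulnA [X in _ <= X]mulnCA.
by rewrite leq_mul2l sum_expn_mul_sum_leq orbT.
Qed.

Lemma imset_ord_recr (T : finType) m (g : 'I_m.+1 -> T) :
  [set g i | i : 'I_m.+1] = g ord_max |: [set g (lift ord_max i) | i : 'I_m].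
Proof.
apply/setP => y; apply/imsetP/setU1P => [[i _ ->]|[->|/imsetP [i _ ->]]].
- by case: (unliftP ord_max i) => [j ->|->]; [right; apply/imsetP; exists j | left].
- by exists ord_max.
- by exists (lift ord_max i).
Qed.

Section Links.
Variables (n : nat) (H : {set {set 'I_n}}).

Definition ext_above (f : {set 'I_n}) : {set 'I_n} :=
  [set x : 'I_n | [forall y in f, y < x] & f :|: [set x] \in H].

Definition link (k : nat) (S : {set 'I_n}) : {set {set 'I_n}} :=
  [set f : {set 'I_n} | #|f| == k & S \subset ext_above f].

Lemma card_leq_sum_ext_above k :
  uniform k.+1 H -> #|H| <= \sum_(f : {set 'I_n} | #|f| == k) #|ext_above f|.
Proof.
move=> unifH.
pose P := [set p : {set 'I_n} * 'I_n | (#|p.1| == k) && (p.2 \in ext_above p.1)].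
have -> : \sum_(f : {set 'I_n} | #|f| == k) #|ext_above f| = #|P|.
  under eq_bigr do rewrite -sum1_card.
  by rewrite pair_big_dep sum1dep_card.
apply: leq_trans (leq_imset_card (fun p => p.1 :|: [set p.2]) _).
apply: subset_leq_card; apply/fintype.subsetP => e He.
have /card_gt0P [x0 ex0] : 0 < #|e| by rewrite (unifH e He).
have [x ex x_max] := @arg_maxnP _ x0 (fun i => i \in e) val ex0.
apply/imsetP; exists (e :\ x, x); last by rewrite /= finset.setUC finset.setD1K.
have card_ex : #|e :\ x| = k by move: (cardsD1 x e); rewrite ex add1n (unifH e He) => -[].
rewrite inE /= card_ex eqxx inE finset.setUC finset.setD1K // He andbT.
by apply/forallP => y; apply/implyP; rewrite !inE ltn_neqAle val_eqE => /andP [-> /x_max].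
Qed.

Lemma sum_card_link k s :
  \sum_(S : {set 'I_n} | #|S| == s) #|link k S| =
  \sum_(f : {set 'I_n} | #|f| == k) 'C(#|ext_above f|, s).
Proof.
have card_link S : #|link k S| = \sum_(f : {set 'I_n} | #|f| == k) (S \subset ext_above f).
  by rewrite -sum1dep_card big_mkcondr /=; apply: eq_bigr => f _; case: ifP.
under eq_bigr do rewrite card_link.
rewrite exchange_big /=; apply: eq_bigr => f _.
rewrite -cards_draws -sum1dep_card [LHS]big_mkcond [RHS]big_mkcond /=.
by apply: eq_bigr => S _; case: (S \subset _); case: (_ == s).
Qed.

Lemma sum_ext_above_excess_leq k s :
  (\sum_(f : {set 'I_n} | #|f| == k) (#|ext_above f| - s)) ^ s.+1 <=
  'C(n, k) ^ s * (s.+1`! * \sum_(S : {set 'I_n} | #|S| == s.+1) #|link k S|).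
Proof.
apply: leq_trans (expn_sum_leq (fun f : {set 'I_n} => #|f| == k) _ s) _.
rewrite -cardsE card_draws card_ord leq_mul2l sum_card_link big_distrr /=.
rewrite leq_sum ?orbT // => f _.
by rewrite mulnC bin_ffact expn_subSn_leq_ffact.
Qed.

Lemma uniform_card_leq t : uniform t H -> t`! * #|H| <= n ^ t.
Proof.
move=> unifH; apply: leq_trans (fact_mul_bin_leq_expn n t).
rewrite leq_mul2l -[n in 'C(n, _)]card_ord -card_draws subset_leq_card ?orbT //.
by apply/fintype.subsetP => e He; rewrite inE unifH.
Qed.

Lemma link_uniform k S : uniform k (link k S).
Proof. by move=> f; rewrite inE => /andP [/eqP]. Qed.

Lemma card_uniform1_Kts_free s :
  uniform 1 H -> ~ contains_ordered_Kts 1 s H -> #|H| < s.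
Proof.
move=> unifH noK; rewrite ltnNge; apply/negP => le_sH; apply: noK.
pose U := [set x : 'I_n | [set x] \in H].
have le_HU : #|H| <= #|U|.
  apply: leq_trans (leq_imset_card finset.set1 U).
  apply/subset_leq_card/fintype.subsetP => e He.
  have /cards1P [x e_x] : #|e| == 1 by rewrite unifH.
  by apply/imsetP; exists x; rewrite // inE -e_x.
have [V sub_VU card_V] := exists_subset_card (leq_trans le_sH le_HU).
exists (fun=> V); split => // [i j|f f_V]; first by rewrite !ord1.
have -> : [set f i | i : 'I_1] = [set f ord0].
  apply/setP => y; rewrite inE; apply/imsetP/eqP => [[i _ ->]|->].
  - by rewrite ord1.
  - by exists ord0.
by have := fintype.subsetP sub_VU _ (f_V ord0); rewrite inE.
Qed.

Lemma link_contains_Kts k s (S : {set 'I_n}) :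
  0 < s -> #|S| = s ->
  contains_ordered_Kts k s (link k S) -> contains_ordered_Kts k.+1 s H.
Proof.
move=> s_gt0 card_S [V [card_V V_sorted V_edges]].
have V_covered i x : x \in V i -> exists2 f, f \in link k S & x \in f.
  move=> xV; pose g j := if j == i then x else odflt x [pick z in V j].
  have g_V j : g j \in V j.
    rewrite /g; case: eqP => [-> // | _]; case: pickP => [z // | V0].
    by move: s_gt0; rewrite -(card_V j) (eq_card0 V0).
  by exists [set g j | j : 'I_k]; [exact: V_edges | apply/imsetP; exists i; rewrite /g ?eqxx].
exists (fun i : 'I_k.+1 => if unlift ord_max i is Some i' then V i' else S).
split=> [i | i j | f f_V]; first by case: unlift.
- case: (unliftP ord_max i) => [i' ->|-> /leq_trans/(_ (ltn_ord j))]; last by rewrite ltnn.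
  case: (unliftP ord_max j) => [j' ->|->] lt_ij x y xV yV.
    by apply: (V_sorted i') xV yV; rewrite !lift_max in lt_ij.
  have [f /[!inE] /andP [_ /fintype.subsetP S_ext] xf] := V_covered _ _ xV.
  by have /[!inE] /andP [/forallP /(_ x) /implyP /(_ xf)] := S_ext y yV.
- rewrite imset_ord_recr.
  have fmax_S : f ord_max \in S by have := f_V ord_max; rewrite unlift_none.
  have g_V j : f (lift ord_max j) \in V j by have := f_V (lift ord_max j); rewrite liftK.
  have /[!inE] /andP [_ /fintype.subsetP S_ext] := V_edges _ g_V.
  by have /[!inE] /andP [_] := S_ext _ fmax_S; rewrite finset.setUC.
Qed.

End Links.

Local Open Scope ring_scope.

Section Bounds.
Variable R : realFieldType.

Lemma ler_exprn_of_eq_nat (r : R) (i j n : nat) :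
  0 < r -> r ^+ j = n%:R -> (i <= j)%N -> r ^+ i <= n%:R.
Proof.
move=> r_gt0 r_n le_ij; have [r_ge1|r_lt1] := lerP 1 r.
  by rewrite -r_n ler_weXn2l.
have n_gt0 : (0 < n)%N by rewrite -(ltr0n R) -r_n exprn_gt0.
by rewrite (le_trans (exprn_ile1 _ (ltW r_gt0) (ltW r_lt1))) // ler1n.
Qed.

Lemma sum_ext_above_excess_bound n (H : {set {set 'I_n}}) k s (rho : R) :
  0 <= rho ->
  (forall S : {set 'I_n}, #|S| = s.+1 ->
     #|link H k.+1 S|%:R * rho ^+ s.+1 <= (s + 4)%:R * n%:R ^+ k.+1) ->
  (\sum_(f : {set 'I_n} | #|f| == k.+1) (#|ext_above H f| - s))%:R * rho
    <= 4 * n%:R ^+ k.+2.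
Proof.
move=> rho_ge0 link_bound; set A := (\sum_(f | _) _)%N.
set G := (\sum_(S : {set 'I_n} | #|S| == s.+1) #|link H k.+1 S|)%N.
have G_bound : G%:R * rho ^+ s.+1 <= 'C(n, s.+1)%:R * ((s + 4)%:R * n%:R ^+ k.+1).
  have -> : 'C(n, s.+1)%:R * ((s + 4)%:R * n%:R ^+ k.+1) =
            \sum_(S : {set 'I_n} | #|S| == s.+1) ((s + 4)%:R * n%:R ^+ k.+1) :> R.
    by rewrite sumr_const -cardsE card_draws card_ord mulr_natl.
  by rewrite natr_sum mulr_suml; apply: ler_sum => S /eqP /link_bound.
have bin_le : 'C(n, k.+1)%:R ^+ s <= (n%:R ^+ k.+1) ^+ s :> R.
  by apply: lerXn2r; rewrite ?nnegrE ?exprn_ge0 // -natrX ler_nat bin_leq_expn.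
have fact_bin_le : (s.+1`! * 'C(n, s.+1))%:R <= n%:R ^+ s.+1 :> R.
  by rewrite -natrX ler_nat fact_mul_bin_leq_expn.
have const_le : (s + 4)%:R <= 4 ^+ s.+1 :> R.
  by rewrite -natrX ler_nat; have := ltn_expl s (isT : (1 < 4)%N); rewrite expnS; lia.
have A_rho_pow : (A%:R * rho) ^+ s.+1 <=
    'C(n, k.+1)%:R ^+ s * (s.+1`! * 'C(n, s.+1))%:R * (s + 4)%:R * n%:R ^+ k.+1.
  rewrite exprMn.
  apply: le_trans (_ : ('C(n, k.+1) ^ s * (s.+1`! * G))%N%:R * rho ^+ s.+1 <= _).
    by rewrite ler_wpM2r ?exprn_ge0 // -natrX ler_nat sum_ext_above_excess_leq.
  rewrite natrM natrX natrM -!mulrA !ler_wpM2l ?exprn_ge0 //.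
  by rewrite natrM -mulrA ler_wpM2l ?ler0n.
have lhs_ge0 : 0 <= A%:R * rho by rewrite mulr_ge0.
have rhs_ge0 : 0 <= 4 * n%:R ^+ k.+2 :> R by rewrite mulr_ge0 ?exprn_ge0.
rewrite -(ler_pXn2r (ltn0Sn s)) ?nnegrE //; apply: le_trans A_rho_pow _.
rewrite [X in _ <= X](_ : _ = (n%:R ^+ k.+1) ^+ s * n%:R ^+ s.+1 * 4 ^+ s.+1 * n%:R ^+ k.+1).
  by do 3 (apply: ler_pM; rewrite ?mulr_ge0 ?exprn_ge0 //).
rewrite exprMn -!exprM mulrC [X in _ = X]mulrAC -!exprD.
by congr (_ ^+ _ * _); lia.
Qed.

Lemma Kts_free_card_mul_le k s n (H : {set {set 'I_n}}) (rho : R) :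
  0 < rho -> rho ^+ (s.+1 ^ k) = n%:R ->
  uniform k.+1 H -> ~ contains_ordered_Kts k.+1 s.+1 H ->
  #|H|%:R * rho <= 4 * n%:R ^+ k.+1 + s%:R * n%:R ^+ k * rho.
Proof.
elim: k n H rho => [|k IH] n H rho rho_gt0 rho_n unifH noK.
  have le_Hs : (#|H| <= s)%N by rewrite -ltnS card_uniform1_Kts_free.
  rewrite expr0 mulr1 -[X in X <= _]add0r lerD ?mulr_ge0 //.
  by rewrite ler_wpM2r ?ler_nat // ltW.
have rho_le : rho ^+ s.+1 <= n%:R.
  by apply: (ler_exprn_of_eq_nat rho_gt0 rho_n); rewrite -{1}(expn1 s.+1) leq_pexp2l.
have link_bound (S : {set 'I_n}) : #|S| = s.+1 ->
    #|link H k.+1 S|%:R * rho ^+ s.+1 <= (s + 4)%:R * n%:R ^+ k.+1.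
  move=> card_S; have noK_link K := noK (link_contains_Kts (ltn0Sn s) card_S K).
  have := IH n _ _ (exprn_gt0 s.+1 rho_gt0) _ (@link_uniform _ H k.+1 S) noK_link.
  rewrite -exprM -expnS => /(_ rho_n) /le_trans; apply.
  have -> : (s + 4)%:R * n%:R ^+ k.+1 = 4 * n%:R ^+ k.+1 + s%:R * n%:R ^+ k * n%:R :> R.
    by rewrite natrD exprSr; ring.
  by rewrite lerD2l ler_wpM2l ?mulr_ge0 ?exprn_ge0.
have := sum_ext_above_excess_bound (ltW rho_gt0) link_bound.
set A := (\sum_(f | _) _)%N => A_bound.
have card_H : (#|H| <= A + s * 'C(n, k.+1))%N.
  rewrite -[n in 'C(n, _)]card_ord -card_draws mulnC -sum_nat_cond_const -big_split /=.
  apply: leq_trans (card_leq_sum_ext_above unifH) _.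
  by apply: leq_sum => f _; rewrite addnC -leq_subLR.
have bin_le : 'C(n, k.+1)%:R <= n%:R ^+ k.+1 :> R by rewrite -natrX ler_nat bin_leq_expn.
apply: le_trans (_ : (A + s * 'C(n, k.+1))%N%:R * rho <= _).
  by rewrite ler_wpM2r ?ler_nat // ltW.
by rewrite natrD natrM mulrDl lerD // -!mulrA ler_wpM2l // ler_wpM2r // ltW.
Qed.

Lemma Kts_free_card_mul_root_le k s n (H : {set {set 'I_n}}) (r : R) :
  0 < r -> r ^+ (k.+2 * s.+1 ^ k.+1) = n%:R ->
  uniform k.+2 H -> ~ contains_ordered_Kts k.+2 s.+1 H ->
  #|H|%:R * r <= 2 * n%:R ^+ k.+2.
Proof.
move=> r_gt0 r_n unifH noK.
have [r_le4|r_gt4] := lerP r 4.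
  have fact_ge2 : (2 <= k.+2`!)%N by rewrite factS (leq_trans _ (leq_pmulr _ (fact_gt0 _))).
  have : (2 * #|H| <= n ^ k.+2)%N by rewrite (leq_trans _ (uniform_card_leq unifH)) ?leq_mul.
  rewrite -(ler_nat R) natrM natrX => H_le.
  by apply: le_trans (ler_wpM2l (ler0n _ _) r_le4) _; lra.
have r_k1 : 4 <= r ^+ k.+1.
  by apply: le_trans (ltW r_gt4) (ler_eXnr (ltn0Sn k) _); lra.
have sr_le : s%:R * r <= n%:R.
  apply: le_trans (ler_exprn_of_eq_nat r_gt0 r_n _ : r ^+ s.+1 <= _); last first.
    by apply: leq_trans (leq_pmull _ (ltn0Sn k.+1)); rewrite -{1}(expn1 s.+1) leq_pexp2l.
  rewrite exprSr ler_wpM2r ?(ltW r_gt0) //.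
  apply: le_trans (_ : (2 ^ s)%N%:R <= _); first by rewrite ler_nat ltnW // ltn_expl.
  by rewrite natrX; apply: lerXn2r; rewrite ?nnegrE; lra.
rewrite -(ler_pM2r (exprn_gt0 k.+1 r_gt0)) -mulrA -exprS.
apply: le_trans (Kts_free_card_mul_le (exprn_gt0 k.+2 r_gt0) _ unifH noK) _.
  by rewrite -exprM.
have term2 : s%:R * n%:R ^+ k.+1 * r ^+ k.+2 <= r ^+ k.+1 * n%:R ^+ k.+2.
  rewrite [r ^+ k.+2]exprS [n%:R ^+ k.+2]exprS.
  rewrite [X in X <= _](_ : _ = s%:R * r * (n%:R ^+ k.+1 * r ^+ k.+1)); last by ring.
  rewrite [X in _ <= X](_ : _ = n%:R * (n%:R ^+ k.+1 * r ^+ k.+1)); last by ring.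
  by rewrite ler_wpM2r ?mulr_ge0 ?exprn_ge0 ?(ltW r_gt0).
have term1 : 4 * n%:R ^+ k.+2 <= r ^+ k.+1 * n%:R ^+ k.+2 by rewrite ler_wpM2r ?exprn_ge0.
lra.
Qed.

End Bounds.

Theorem lemma2p4 (R : realType) (t s n : nat) (H : {set {set 'I_n}}) :
  (2 <= t)%N -> (1 <= s)%N ->
  uniform t H ->
  ~ contains_ordered_Kts t s H ->
  (#|H|%:R : R) <=
    2 * (n%:R `^ (t%:R - 1 / (t%:R * (s%:R ^+ t.-1)))).
Proof.
case: t => [|[|k]] // _; case: s => // s _ unifH noK; rewrite [k.+2.-1]/=.
have [n0|n_gt0] := posnP n.
  have := uniform_card_leq unifH.
  rewrite [X in (X ^ _)%N]n0 exp0n // leqn0 muln_eq0 => /orP [].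
    by rewrite gtn_eqF ?fact_gt0.
  by move=> /eqP ->; rewrite mulr_ge0 ?powR_ge0.
set N : R := n%:R; set D : R := k.+2%:R * s.+1%:R ^+ k.+1.
have N_gt0 : 0 < N by rewrite ltr0n.
have D_gt0 : 0 < D by rewrite mulr_gt0 ?exprn_gt0 ?ltr0n.
have r_N : (N `^ (1 / D)) ^+ (k.+2 * s.+1 ^ k.+1) = N.
  rewrite -powR_mulrn ?powR_ge0 // -powRrM natrM natrX -/D.
  by rewrite mul1r mulVf ?gt_eqF // powRr1 ?ltW.
rewrite powRB ?(gt_eqF N_gt0) ?implybT // powR_mulrn ?(ltW N_gt0) //.
rewrite mulrA ler_pdivlMr ?powR_gt0 //.
exact: Kts_free_card_mul_root_le (powR_gt0 _ N_gt0) r_N unifH noK.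
Qed.
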